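(* Let $H\subseteq\ell^2$ be the Hilbert cube of real sequences $x$ with $x_k\in[0,\tfrac1k]$ for all $k\in\mathbb{N}$, with the $\ell^2$ metric. Define $x=0$, $y=\tfrac12e_1+\sum_{k=2}^\infty\tfrac1k e_k$, and $z=e_1$. Then $\{x,y,z\}$ is an optimal code of size $3$ in $H$ and is unique up to isometry.
   Context: An optimal code of size $n$ is an $n$-element subset of $H$ maximizing the minimum distance between distinct points; unique up to isometry means every optimal code of size $3$ is the image of $\{x,y,z\}$ under an isometry of $H$ onto itself. $e_k$ is the $k$th standard basis vector. *)

From Stdlib Require Import Reals Lra List.
From Coquelicot Require Import Coquelicot.
Import ListNotations.
Open Scope R_scope.

(* Real sequences. Index convention: the paper's coordinate k (k >= 1) is
   stored at index k-1, i.e. coordinate i : nat corresponds to k = i+1. *)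
Definition seqR := nat -> R.

Definition inH (x : seqR) : Prop :=
  forall i : nat, 0 <= x i <= / INR (S i).

Definition l2dist (x y : seqR) : R :=
  sqrt (Series (fun i => (x i - y i) ^ 2)).

Definition is_code (n : nat) (C : list seqR) : Prop :=
  NoDup C /\ length C = n /\ (forall p, In p C -> inH p).

Definition mindist_ge (C : list seqR) (r : R) : Prop :=
  forall p q, In p C -> In q C -> p <> q -> r <= l2dist p q.

Definition optimal_code (n : nat) (C : list seqR) : Prop :=
  is_code n C /\
  forall C', is_code n C' -> forall r, mindist_ge C' r -> mindist_ge C r.

Definition isometry_onto_H (f : seqR -> seqR) : Prop :=
  (forall p, inH p -> inH (f p)) /\
  (forall p q, inH p -> inH q -> l2dist (f p) (f q) = l2dist p q) /\
  (forall q, inH q -> exists p, inH p /\ f p = q).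

Definition ptx : seqR := fun _ => 0.
Definition pty : seqR := fun i => match i with O => / 2 | _ => / INR (S i) end.
Definition ptz : seqR := fun i => match i with O => 1 | _ => 0 end.

(* Write the squared distance as [(p 0 - q 0)^2] plus a tail, which is at most
   [T = sum_(k >= 2) 1/k^2 <= 3/4]. Of three first coordinates in [[0, 1]] two
   lie within [1/2] of each other, so some pair of a 3-code has squared
   distance at most [1/4 + T]; {x, y, z} attains this, its third distance being
   [1 >= 1/4 + T].  If every pair attains it, the first coordinates are
   [0, 1/2, 1] and every tail difference is extremal, so in each later
   coordinate the three points alternate between the two ends of the side;
   reflecting the coordinates where the first point sits at the top maps
   {x, y, z} onto the code.  The argument works in any box with
   square-summable sides. *)

From Stdlib Require Import Reals List Lra Psatz FunctionalExtensionality.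
From Coquelicot Require Import Coquelicot.
Import ListNotations.
Open Scope R_scope.

Lemma is_series_telescoping (u : nat -> R) :
  is_lim_seq u 0 -> is_series (fun k => u k - u (S k)) (u O).
Proof.
  intros Hu.
  assert (partial : forall N, sum_f_R0 (fun k => u k - u (S k)) N = u O - u (S N)).
  { induction N as [|N IH]; cbn [sum_f_R0]; [reflexivity | rewrite IH; ring]. }
  assert (lim : is_lim_seq (fun N => u O - u (S N)) (u O - 0)).
  { apply is_lim_seq_minus'; [apply is_lim_seq_const | apply (is_lim_seq_incr_1 u 0), Hu]. }
  rewrite Rminus_0_r in lim.
  apply (is_lim_seq_ext _ (sum_n (fun k => u k - u (S k)))) in lim; [exact lim|].
  intros N; rewrite sum_n_Reals, partial; reflexivity.
Qed.

Lemma Series_const0 : Series (fun _ => 0) = 0.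
Proof.
  rewrite (Series_ext _ (fun k => 0 * 0)) by (intros; ring).
  rewrite Series_scal_l; ring.
Qed.

Lemma Series_term_le (a : nat -> R) n :
  (forall k, 0 <= a k) -> ex_series a -> a n <= Series a.
Proof.
  intros a_ge0 Ea.
  rewrite (Series_incr_n a (S n)) by (lia || exact Ea); simpl pred.
  assert (tail_ge0 : 0 <= Series (fun k => a (S n + k)%nat)).
  { rewrite <- Series_const0. apply Series_le.
    - intros k; split; [lra | apply a_ge0].
    - apply (ex_series_incr_n a (S n)), Ea. }
  destruct n as [|m]; cbn [sum_f_R0]; [lra|].
  pose proof (cond_pos_sum a m a_ge0); lra.
Qed.

Lemma Series_eq_termwise (a c : nat -> R) :
  (forall k, 0 <= a k <= c k) -> ex_series c -> Series c <= Series a ->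
  forall k, a k = c k.
Proof.
  intros Hac Ec Hle k.
  assert (Ea : ex_series a).
  { apply (@ex_series_le R_AbsRing R_CompleteNormedModule _ c); [|exact Ec].
    intros n; change (norm (a n)) with (Rabs (a n)).
    rewrite Rabs_pos_eq; apply Hac. }
  assert (Ediff : ex_series (fun n => c n - a n)).
  { apply (@ex_series_minus R_AbsRing R_NormedModule); assumption. }
  pose proof (Series_term_le (fun n => c n - a n) k) as Hk; simpl in Hk.
  rewrite Series_minus in Hk by assumption.
  assert (Hdiff : c k - a k <= Series c - Series a).
  { apply Hk; [intros n; specialize (Hac n); lra | exact Ediff]. }
  specialize (Hac k); lra.
Qed.

Lemma sort3_wlog {A : Type} (key : A -> R) (P : A -> A -> A -> Prop) :
  (forall a b c, P a b c -> P b a c) ->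
  (forall a b c, P a b c -> P a c b) ->
  (forall a b c, key a <= key b <= key c -> P a b c) ->
  forall a b c, P a b c.
Proof.
  intros swap12 swap23 sorted a b c.
  destruct (Rle_dec (key a) (key b)), (Rle_dec (key b) (key c)),
    (Rle_dec (key a) (key c));
  first [ apply sorted; lra
        | apply swap12, sorted; lra
        | apply swap23, sorted; lra
        | apply swap12, swap23, sorted; lra
        | apply swap23, swap12, sorted; lra
        | apply swap12, swap23, swap12, sorted; lra ].
Qed.

Definition dist2 (p q : seqR) : R := Series (fun i => (p i - q i) ^ 2).

Lemma dist2_sym p q : dist2 p q = dist2 q p.
Proof. apply Series_ext; intros i; ring. Qed.

Lemma dist2_diag p : dist2 p p = 0.
Proof. rewrite <- Series_const0; apply Series_ext; intros i; ring. Qed.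

Lemma neq_of_dist2_pos p q : 0 < dist2 p q -> p <> q.
Proof. intros Hpos ->; rewrite dist2_diag in Hpos; lra. Qed.

Lemma l2dist_sym p q : l2dist p q = l2dist q p.
Proof. exact (f_equal sqrt (dist2_sym p q)). Qed.

Section HilbertBox.

Variable b : nat -> R.
Hypothesis b_ge0 : forall i, 0 <= b i.
Hypothesis ex_series_b2 : ex_series (fun i => b i ^ 2).

Definition in_box (x : seqR) : Prop := forall i, 0 <= x i <= b i.

Definition box_tail : R := Series (fun k => b (S k) ^ 2).

Definition crit_dist2 : R := b O ^ 2 / 4 + box_tail.

Definition code_x : seqR := fun _ => 0.
Definition code_y : seqR := fun i => match i with O => b O / 2 | _ => b i end.
Definition code_z : seqR := fun i => match i with O => b O | _ => 0 end.

Lemma sqr_diff_bounds p q i :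
  in_box p -> in_box q -> 0 <= (p i - q i) ^ 2 <= b i ^ 2.
Proof.
  intros Hp Hq; specialize (Hp i); specialize (Hq i).
  split; [apply pow2_ge_0 | nra].
Qed.

Lemma ex_series_sqr_diff p q :
  in_box p -> in_box q -> ex_series (fun i => (p i - q i) ^ 2).
Proof.
  intros Hp Hq.
  apply (@ex_series_le R_AbsRing R_CompleteNormedModule _ (fun i => b i ^ 2));
    [|exact ex_series_b2].
  intros i; change (norm ((p i - q i) ^ 2)) with (Rabs ((p i - q i) ^ 2)).
  rewrite Rabs_pos_eq; apply sqr_diff_bounds; assumption.
Qed.

Lemma dist2_ge0 p q : in_box p -> in_box q -> 0 <= dist2 p q.
Proof.
  intros Hp Hq; rewrite <- Series_const0; apply Series_le;
    [intros i; split; [lra | apply sqr_diff_bounds] | apply ex_series_sqr_diff];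
    assumption.
Qed.

Lemma dist2_split p q : in_box p -> in_box q ->
  dist2 p q = (p O - q O) ^ 2 + Series (fun k => (p (S k) - q (S k)) ^ 2).
Proof. intros Hp Hq; apply Series_incr_1, ex_series_sqr_diff; assumption. Qed.

Lemma ex_series_box_tail : ex_series (fun k => b (S k) ^ 2).
Proof. apply (ex_series_incr_1 (fun i => b i ^ 2)), ex_series_b2. Qed.

Lemma tail_le_box_tail p q : in_box p -> in_box q ->
  Series (fun k => (p (S k) - q (S k)) ^ 2) <= box_tail.
Proof.
  intros Hp Hq; apply Series_le; [intros k; apply sqr_diff_bounds; assumption|].
  exact ex_series_box_tail.
Qed.

Lemma three_points_close p q s : in_box p -> in_box q -> in_box s ->
  dist2 p q <= crit_dist2 \/ dist2 q s <= crit_dist2 \/ dist2 p s <= crit_dist2.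
Proof.
  revert p q s.
  apply (sort3_wlog (fun x => x O)
           (fun p q s => in_box p -> in_box q -> in_box s ->
              dist2 p q <= crit_dist2 \/ dist2 q s <= crit_dist2 \/
              dist2 p s <= crit_dist2)).
  - intros p q s H Hq Hp Hs; rewrite (dist2_sym q p); specialize (H Hp Hq Hs); tauto.
  - intros p q s H Hp Hs Hq; rewrite (dist2_sym s q); specialize (H Hp Hq Hs); tauto.
  - intros p q s sorted Hp Hq Hs; unfold crit_dist2.
    rewrite (dist2_split p q), (dist2_split q s) by assumption.
    pose proof (tail_le_box_tail p q Hp Hq); pose proof (tail_le_box_tail q s Hq Hs).
    pose proof (Hp O); pose proof (Hs O).
    destruct (Rle_dec (q O - p O) (b O / 2)); [left | right; left]; nra.
Qed.

Lemma in_box_code_x : in_box code_x.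
Proof. intros i; unfold code_x; split; [lra | apply b_ge0]. Qed.

Lemma in_box_code_y : in_box code_y.
Proof. intros [|i]; simpl; [pose proof (b_ge0 O) | pose proof (b_ge0 (S i))]; lra. Qed.

Lemma in_box_code_z : in_box code_z.
Proof. intros [|i]; simpl; [pose proof (b_ge0 O) | pose proof (b_ge0 (S i))]; lra. Qed.

Lemma dist2_code_xy : dist2 code_x code_y = crit_dist2.
Proof.
  rewrite dist2_split by (apply in_box_code_x || apply in_box_code_y).
  unfold crit_dist2, box_tail, code_x, code_y; f_equal; [field|].
  apply Series_ext; intros k; ring.
Qed.

Lemma dist2_code_yz : dist2 code_y code_z = crit_dist2.
Proof.
  rewrite dist2_split by (apply in_box_code_y || apply in_box_code_z).
  unfold crit_dist2, box_tail, code_y, code_z; f_equal; [field|].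
  apply Series_ext; intros k; ring.
Qed.

Lemma dist2_code_xz : dist2 code_x code_z = b O ^ 2.
Proof.
  rewrite dist2_split by (apply in_box_code_x || apply in_box_code_z).
  unfold code_x, code_z.
  rewrite (Series_ext _ (fun _ => 0)) by (intros k; ring).
  rewrite Series_const0; ring.
Qed.

Definition flip (F : nat -> bool) (w : seqR) : seqR :=
  fun i => if F i then b i - w i else w i.

Lemma flip_in_box F w : in_box w -> in_box (flip F w).
Proof. intros Hw i; specialize (Hw i); unfold flip; destruct (F i); lra. Qed.

Lemma flip_involutive F w : flip F (flip F w) = w.
Proof.
  apply functional_extensionality; intros i; unfold flip; destruct (F i); ring.
Qed.

Lemma dist2_flip F p q : dist2 (flip F p) (flip F q) = dist2 p q.
Proof. apply Series_ext; intros i; unfold flip; destruct (F i); ring. Qed.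

Lemma alternating_endpoints x y z c :
  0 <= x <= c -> 0 <= y <= c -> 0 <= z <= c ->
  (x - y) ^ 2 = c ^ 2 -> (y - z) ^ 2 = c ^ 2 ->
  (x = 0 /\ y = c /\ z = 0) \/ (x = c /\ y = 0 /\ z = c).
Proof.
  intros Hx Hy Hz Exy Eyz.
  assert (Fxy : (x - y - c) * (x - y + c) = 0) by nra.
  assert (Fyz : (y - z - c) * (y - z + c) = 0) by nra.
  apply Rmult_integral in Fxy; apply Rmult_integral in Fyz.
  destruct Fxy, Fyz; lra.
Qed.

Lemma extremal_sorted_triple p q s : in_box p -> in_box q -> in_box s ->
  p O <= q O <= s O -> crit_dist2 <= dist2 p q -> crit_dist2 <= dist2 q s ->
  exists F, flip F code_x = p /\ flip F code_y = q /\ flip F code_z = s.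
Proof.
  intros Hp Hq Hs sorted Hpq Hqs.
  rewrite dist2_split in Hpq, Hqs by assumption; unfold crit_dist2 in Hpq, Hqs.
  pose proof (tail_le_box_tail p q Hp Hq) as Tpq.
  pose proof (tail_le_box_tail q s Hq Hs) as Tqs.
  pose proof (Hp O); pose proof (Hs O); pose proof (b_ge0 O).
  assert (gap_pq : b O / 2 <= q O - p O) by nra.
  assert (gap_qs : b O / 2 <= s O - q O) by nra.
  assert (first_coords : p O = 0 /\ q O = b O / 2 /\ s O = b O) by lra.
  assert (tail_coords : forall k,
    (p (S k) = 0 /\ q (S k) = b (S k) /\ s (S k) = 0) \/
    (p (S k) = b (S k) /\ q (S k) = 0 /\ s (S k) = b (S k))).
  { assert (full_pq := Series_eq_termwise (fun k => (p (S k) - q (S k)) ^ 2)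
                          (fun k => b (S k) ^ 2)).
    assert (full_qs := Series_eq_termwise (fun k => (q (S k) - s (S k)) ^ 2)
                          (fun k => b (S k) ^ 2)).
    intros k; apply alternating_endpoints; try apply Hp; try apply Hq; try apply Hs;
      [apply full_pq | apply full_qs];
      first [ intros n; apply sqr_diff_bounds; assumption
            | exact ex_series_box_tail
            | fold box_tail; nra ]. }
  (* Reflect the later coordinates in which [p] sits at the top of its side. *)
  exists (fun i => match i with O => false | S _ => if Req_EM_T (p i) 0 then false else true end).
  split; [|split]; apply functional_extensionality; intros [|k];
    unfold flip, code_x, code_y, code_z; try lra;
    destruct (tail_coords k) as [(Ep & Eq & Es)|(Ep & Eq & Es)];
    destruct Req_EM_T; lra.
Qed.

Lemma extremal_triple p q s : in_box p -> in_box q -> in_box s ->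
  crit_dist2 <= dist2 p q -> crit_dist2 <= dist2 q s -> crit_dist2 <= dist2 p s ->
  exists F, forall w, In w [p; q; s] <->
    w = flip F code_x \/ w = flip F code_y \/ w = flip F code_z.
Proof.
  revert p q s.
  apply (sort3_wlog (fun x => x O)
           (fun p q s => in_box p -> in_box q -> in_box s ->
              crit_dist2 <= dist2 p q -> crit_dist2 <= dist2 q s ->
              crit_dist2 <= dist2 p s ->
              exists F, forall w, In w [p; q; s] <->
                w = flip F code_x \/ w = flip F code_y \/ w = flip F code_z)).
  - intros p q s H Hq Hp Hs Hqp Hps Hqs; rewrite dist2_sym in Hqp.
    destruct (H Hp Hq Hs Hqp Hqs Hps) as [F HF]; exists F; intros w; rewrite <- HF.
    simpl; tauto.
  - intros p q s H Hp Hs Hq Hps Hsq Hpq; rewrite dist2_sym in Hsq.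
    destruct (H Hp Hq Hs Hpq Hsq Hps) as [F HF]; exists F; intros w; rewrite <- HF.
    simpl; tauto.
  - intros p q s sorted Hp Hq Hs Hpq Hqs _.
    destruct (extremal_sorted_triple p q s) as (F & <- & <- & <-); try assumption.
    exists F; intros w; simpl; intuition congruence.
Qed.

End HilbertBox.

Lemma is_code_triple p q s : inH p -> inH q -> inH s ->
  p <> q -> q <> s -> p <> s -> is_code 3 [p; q; s].
Proof.
  intros Hp Hq Hs Hpq Hqs Hps; split; [|split; [reflexivity|]].
  - repeat constructor; simpl; intuition.
  - intros w [<-|[<-|[<-|[]]]]; assumption.
Qed.

Lemma is_code_triple_inv C : is_code 3 C ->
  exists p q s, C = [p; q; s] /\ p <> q /\ q <> s /\ p <> s /\
    inH p /\ inH q /\ inH s.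
Proof.
  intros (Hnd & Hlen & Hin).
  destruct C as [|p [|q [|s [|]]]]; try discriminate.
  exists p, q, s; split; [reflexivity|].
  inversion Hnd as [|? ? Hp Hnd']; inversion Hnd' as [|? ? Hq _]; simpl in Hp, Hq.
  repeat split; try (intros ->; tauto); apply Hin; simpl; tauto.
Qed.

Lemma mindist_ge_triple p q s r : p <> q -> q <> s -> p <> s ->
  mindist_ge [p; q; s] r ->
  r <= l2dist p q /\ r <= l2dist q s /\ r <= l2dist p s.
Proof.
  intros Hpq Hqs Hps Hr; repeat split; apply Hr; simpl; tauto.
Qed.

Lemma mindist_ge_triple_intro p q s r :
  r <= l2dist p q -> r <= l2dist q s -> r <= l2dist p s ->
  mindist_ge [p; q; s] r.
Proof.
  intros Rpq Rqs Rps x y Hx Hy Hxy; simpl in Hx, Hy.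
  destruct Hx as [<-|[<-|[<-|[]]]]; destruct Hy as [<-|[<-|[<-|[]]]];
    solve [ congruence | assumption | rewrite l2dist_sym; assumption ].
Qed.

Lemma mindist_ge_le C r r' : r <= r' -> mindist_ge C r' -> mindist_ge C r.
Proof. intros Hr H x y Hx Hy Hxy; specialize (H x y Hx Hy Hxy); lra. Qed.

Definition side (i : nat) : R := / INR (S i).

Lemma side_pos i : 0 < side i.
Proof. apply Rinv_0_lt_compat, lt_0_INR; lia. Qed.

Lemma side_ge0 i : 0 <= side i.
Proof. apply Rlt_le, side_pos. Qed.

Lemma side_0 : side O = 1.
Proof. unfold side; simpl; field. Qed.

Lemma side_succ_sqr_le k : side (S k) ^ 2 <= side k - side (S k).
Proof.
  unfold side; rewrite (S_INR (S k)); set (x := INR (S k)).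
  assert (0 < x) by (apply lt_0_INR; lia).
  replace (/ x - / (x + 1)) with (/ (x * (x + 1))) by (field; lra).
  rewrite pow_inv; apply Rinv_le_contravar; nra.
Qed.

Lemma side_lim0 : is_lim_seq side 0.
Proof.
  replace (Finite 0) with (Rbar_inv p_infty) by reflexivity.
  apply is_lim_seq_inv; [|discriminate].
  apply (is_lim_seq_incr_1 INR), is_lim_seq_INR.
Qed.

Lemma ex_series_side_sqr : ex_series (fun i => side i ^ 2).
Proof.
  apply ex_series_incr_1.
  apply (@ex_series_le R_AbsRing R_CompleteNormedModule _ (fun k => side k - side (S k))).
  - intros k; change (norm (side (S k) ^ 2)) with (Rabs (side (S k) ^ 2)).
    rewrite Rabs_pos_eq by apply pow2_ge_0; apply side_succ_sqr_le.
  - eexists; apply is_series_telescoping, side_lim0.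
Qed.

Lemma box_tail_side_le : box_tail side <= 3 / 4.
Proof.
  assert (shifted_lim0 : is_lim_seq (fun k => side (S k)) 0)
    by apply (is_lim_seq_incr_1 side), side_lim0.
  assert (telescope : Series (fun k => side (S k) - side (S (S k))) = side 1)
    by apply is_series_unique, is_series_telescoping, shifted_lim0.
  assert (tail2_le : Series (fun k => side (S (S k)) ^ 2) <= side 1).
  { rewrite <- telescope; apply Series_le.
    - intros k; split; [apply pow2_ge_0 | apply side_succ_sqr_le].
    - eexists; apply is_series_telescoping, shifted_lim0. }
  assert (side1 : side 1 = / 2) by (unfold side; simpl; field).
  unfold box_tail; rewrite Series_incr_1.
  - rewrite side1 in *; lra.
  - apply ex_series_box_tail, ex_series_side_sqr.
Qed.

Lemma flip_isometry_onto_H F : isometry_onto_H (flip side F).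
Proof.
  split; [|split].
  - apply flip_in_box.
  - intros p q _ _; exact (f_equal sqrt (dist2_flip side F p q)).
  - intros q Hq; exists (flip side F q); split;
      [apply flip_in_box, Hq | apply flip_involutive].
Qed.

Lemma pty_code_y : pty = code_y side.
Proof.
  apply functional_extensionality; intros [|i]; [unfold side; simpl; field|reflexivity].
Qed.

Lemma ptz_code_z : ptz = code_z side.
Proof.
  apply functional_extensionality; intros [|i]; [unfold side; simpl; field|reflexivity].
Qed.

Lemma crit_dist2_side_bounds : 0 < crit_dist2 side <= 1.
Proof.
  assert (0 <= box_tail side).
  { unfold box_tail; rewrite <- Series_const0; apply Series_le;
      [intros k; split; [lra | apply pow2_ge_0]|].
    apply ex_series_box_tail, ex_series_side_sqr. }
  pose proof box_tail_side_le.
  unfold crit_dist2; rewrite side_0; lra.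
Qed.

Lemma code_xyz_dist2_ge : crit_dist2 side <= dist2 ptx pty /\
  crit_dist2 side <= dist2 pty ptz /\ crit_dist2 side <= dist2 ptx ptz.
Proof.
  pose proof side_ge0; pose proof ex_series_side_sqr; pose proof crit_dist2_side_bounds.
  rewrite pty_code_y, ptz_code_z, dist2_code_xy, dist2_code_yz, dist2_code_xz
    by assumption.
  rewrite side_0; lra.
Qed.

Lemma code_xyz_is_code : is_code 3 [ptx; pty; ptz].
Proof.
  pose proof side_ge0; pose proof ex_series_side_sqr.
  pose proof crit_dist2_side_bounds; pose proof code_xyz_dist2_ge.
  rewrite pty_code_y, ptz_code_z in *.
  apply is_code_triple;
    [apply in_box_code_x | apply in_box_code_y | apply in_box_code_z | ..];
    try assumption; apply neq_of_dist2_pos; lra.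
Qed.

Lemma code_xyz_mindist : mindist_ge [ptx; pty; ptz] (sqrt (crit_dist2 side)).
Proof.
  pose proof code_xyz_dist2_ge.
  apply mindist_ge_triple_intro; apply sqrt_le_1_alt; tauto.
Qed.

Lemma code_xyz_optimal : optimal_code 3 [ptx; pty; ptz].
Proof.
  split; [exact code_xyz_is_code|].
  intros C HC r Hr.
  destruct (is_code_triple_inv C HC) as (p & q & s & -> & Hpq & Hqs & Hps & Hp & Hq & Hs).
  destruct (mindist_ge_triple p q s r Hpq Hqs Hps Hr) as (Rpq & Rqs & Rps).
  apply (mindist_ge_le _ r (sqrt (crit_dist2 side))); [|exact code_xyz_mindist].
  destruct (three_points_close side ex_series_side_sqr p q s Hp Hq Hs) as [H|[H|H]];
    eapply Rle_trans; try apply sqrt_le_1_alt, H; assumption.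
Qed.

Lemma crit_dist2_le_of_l2dist x y : inH x -> inH y ->
  sqrt (crit_dist2 side) <= l2dist x y -> crit_dist2 side <= dist2 x y.
Proof.
  intros Hx Hy H; pose proof crit_dist2_side_bounds.
  apply sqrt_le_0; [lra | apply (dist2_ge0 side ex_series_side_sqr) | ]; assumption.
Qed.

Lemma optimal_code_triple_flip C : optimal_code 3 C ->
  exists F, forall w, In w C <->
    w = flip side F ptx \/ w = flip side F pty \/ w = flip side F ptz.
Proof.
  intros [HC Hopt].
  destruct (is_code_triple_inv C HC) as (p & q & s & -> & Hpq & Hqs & Hps & Hp & Hq & Hs).
  destruct (mindist_ge_triple p q s _ Hpq Hqs Hps
              (Hopt _ code_xyz_is_code _ code_xyz_mindist)) as (Rpq & Rqs & Rps).
  rewrite pty_code_y, ptz_code_z.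
  apply (extremal_triple side side_ge0 ex_series_side_sqr); try assumption;
    apply crit_dist2_le_of_l2dist; assumption.
Qed.

Theorem lemma4p20 :
  optimal_code 3 [ptx; pty; ptz] /\
  (forall C : list seqR, optimal_code 3 C ->
     exists f : seqR -> seqR, isometry_onto_H f /\
       (forall q, In q C <-> (q = f ptx \/ q = f pty \/ q = f ptz))).
Proof.
  split; [exact code_xyz_optimal|].
  intros C HC.
  destruct (optimal_code_triple_flip C HC) as [F HF].
  exists (flip side F); split; [apply flip_isometry_onto_H | exact HF].
Qed.
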